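(* Let $m$ be a positive integer whose Collatz trajectory $\{T^k(m)\}_{k=1}^\infty$ is unbounded (diverging). Then the function \[ F(z)=\sum_{p=0}^\infty z^{m2^p}+\sum_{k=1}^\infty z^{T^k(m)} \] belongs to $A(D)$ and is a fixed point of $\mathcal{T}$: $\mathcal{T}F=F$.
   Context: $T:\mathbb{Z}\to\mathbb{Z}$ is the (reduced) Collatz map: $T(n)=\frac{3n+1}{2}$ for odd $n$, $T(n)=\frac n2$ for even $n$; $T^k$ is its $k$-th iterate. $D$ is the open unit disk and $A(D)$ the space of holomorphic functions on $D$. The operator $\mathcal{T}$ is defined on $A(D)$ by $\mathcal{T}\big(\sum_{n\ge0}a_nz^n\big)=\sum_{n\ge0}a_nz^{T(n)}$, i.e. $\mathcal{T}z^n=z^{T(n)}$ (equivalently $\mathcal{T}f(z)=(Sf)(\sqrt z)+\sqrt z\,(Af)(z^{3/2})$ with $S,A$ the even and odd parts of $f$). *)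

From Stdlib Require Import Reals Arith.
From Coquelicot Require Import Coquelicot.
Open Scope R_scope.

Definition T (n : nat) : nat :=
  if Nat.odd n then ((3 * n + 1) / 2)%nat else (n / 2)%nat.

Definition Titer (k n : nat) : nat := Nat.iter k T n.

Definition unbounded_trajectory (m : nat) : Prop :=
  forall B : nat, exists k : nat, (1 <= k)%nat /\ (B < Titer k m)%nat.

Definition inD (z : C) : Prop := Cmod z < 1.

(* value of a complex series, taken componentwise (meaningful when it converges) *)
Definition Cseries (u : nat -> C) : C :=
  (Series (fun n => fst (u n)), Series (fun n => snd (u n))).

Definition in_AD (f : C -> C) : Prop :=
  forall z : C, inD z -> ex_derive (K := C_AbsRing) (V := C_NormedModule) f z.

Definition power_series_rep (a : nat -> C) (f : C -> C) : Prop :=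
  forall z : C, inD z ->
    is_series (K := C_AbsRing) (V := C_NormedModule) (fun n => (a n * Cpow z n)%C) (f z).

(* g = 𝒯 f, where 𝒯 (sum a_n z^n) = sum a_n z^{T(n)}, for f with coefficients a *)
Definition collatz_op_image (a : nat -> C) (g : C -> C) : Prop :=
  forall z : C, inD z ->
    is_series (K := C_AbsRing) (V := C_NormedModule) (fun n => (a n * Cpow z (T n))%C) (g z).

Definition F_part1 (m : nat) (z : C) : nat -> C := fun p => Cpow z (m * 2 ^ p).
Definition F_part2 (m : nat) (z : C) : nat -> C := fun k => Cpow z (Titer (S k) m).

Definition F (m : nat) (z : C) : C :=
  (Cseries (F_part1 m z) + Cseries (F_part2 m z))%C.

From Stdlib Require Import Reals Arith.
From Coquelicot Require Import Coquelicot.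
Open Scope R_scope.
From Stdlib Require Import Lia Lra FinFun ClassicalEpsilon.

(* If the trajectory of m were ever to repeat a value it would be eventually periodic,
   hence bounded; so the exponents T^k(m), k >= 1, are pairwise distinct, as are the m 2^p.
   Both series of F are therefore subseries of the geometric series and can be re-indexed
   by the exponent: F(z) = sum_n c_n z^n with c_n in {0, 1, 2}, which makes F holomorphic on D,
   and the coefficients are unique.  Applying T to the exponents, m 2^(p+1) becomes m 2^p,
   so the first series gains exactly the term z^(T m), while the second series is shifted
   by one step and loses exactly that term. *)

Section Orbits.
Variables (A : Type) (f : A -> A) (x : A).

Lemma iter_periodic_from a p :
  Nat.iter (a + p) f x = Nat.iter a f x ->
  forall n, (a <= n)%nat -> Nat.iter (n + p) f x = Nat.iter n f x.
Proof.
  intros Hper n Hn.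
  replace (n + p)%nat with ((n - a) + (a + p))%nat by lia.
  rewrite Nat.iter_add, Hper, <- Nat.iter_add.
  f_equal; lia.
Qed.

Lemma iter_periodic_values a p : (0 < p)%nat ->
  Nat.iter (a + p) f x = Nat.iter a f x ->
  forall n, exists t, (t < a + p)%nat /\ Nat.iter n f x = Nat.iter t f x.
Proof.
  intros Hp Hper n. induction n as [n IH] using lt_wf_ind.
  destruct (Nat.lt_ge_cases n (a + p)) as [Hn | Hn].
  - now exists n.
  - destruct (IH (n - p)%nat ltac:(lia)) as [t [Ht Heq]].
    exists t. split; [exact Ht |].
    rewrite <- Heq, <- (iter_periodic_from a p Hper (n - p)) by lia.
    f_equal; lia.
Qed.

End Orbits.

Lemma bounded_on_segment (e : nat -> nat) M :
  exists B, forall j, (j <= M)%nat -> (e j <= B)%nat.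
Proof.
  induction M as [| M [B HB]].
  - exists (e 0%nat). intros j Hj. now replace j with 0%nat by lia.
  - exists (Nat.max B (e (S M))). intros j Hj.
    destruct (Nat.eq_dec j (S M)) as [-> | Hne]; [lia |].
    specialize (HB j ltac:(lia)). lia.
Qed.

Lemma injective_fiber_bounded (e : nat -> nat) n :
  Injective e -> exists K, forall j, e j = n -> (j <= K)%nat.
Proof.
  intros He. destruct (classic (exists j, e j = n)) as [[j0 Hj0] | Hnone].
  - exists j0. intros j Hj. assert (j = j0) by (apply He; congruence). lia.
  - exists 0%nat. intros j Hj. exfalso. eauto.
Qed.

Lemma injective_preimage_bounded (e : nat -> nat) N :
  Injective e -> exists K, forall j, (e j <= N)%nat -> (j <= K)%nat.
Proof.
  intros He. induction N as [| N [K HK]].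
  - destruct (injective_fiber_bounded e 0 He) as [K HK].
    exists K. intros j Hj. apply HK. lia.
  - destruct (injective_fiber_bounded e (S N) He) as [K' HK'].
    exists (Nat.max K K'). intros j Hj.
    destruct (Nat.eq_dec (e j) (S N)) as [Heq | Hne].
    + specialize (HK' j Heq). lia.
    + specialize (HK j ltac:(lia)). lia.
Qed.

Lemma unbounded_orbit_injective (f : nat -> nat) x :
  (forall B, exists k, (B < Nat.iter k f x)%nat) -> Injective (fun k => Nat.iter k f x).
Proof.
  intros Hunb.
  assert (Hlt : forall i j, (i < j)%nat -> Nat.iter i f x <> Nat.iter j f x).
  { intros i j Hij Heq.
    destruct (bounded_on_segment (fun t => Nat.iter t f x) j) as [B HB].
    destruct (Hunb B) as [k Hk].
    destruct (iter_periodic_values nat f x i (j - i) ltac:(lia)) with k as [t [Ht Hkt]].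
    { replace (i + (j - i))%nat with j by lia. now symmetry. }
    specialize (HB t ltac:(lia)). simpl in HB. lia. }
  intros i j Heq.
  destruct (lt_eq_lt_dec i j) as [[Hij | Hij] | Hij]; [| exact Hij |].
  - now destruct (Hlt i j Hij).
  - now destruct (Hlt j i Hij).
Qed.

Lemma T_double n : T (2 * n) = n.
Proof.
  unfold T. rewrite Nat.odd_even, Nat.mul_comm, Nat.div_mul; lia.
Qed.

Lemma T_mul_pow2_S m p : T (m * 2 ^ S p) = (m * 2 ^ p)%nat.
Proof. rewrite <- T_double. f_equal. simpl. lia. Qed.

Lemma mul_pow2_injective m : (0 < m)%nat -> Injective (fun p => m * 2 ^ p)%nat.
Proof.
  intros Hm i j H. apply Nat.mul_cancel_l in H; [| lia].
  apply Nat.pow_inj_r in H; lia.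
Qed.

Lemma trajectory_injective m :
  unbounded_trajectory m -> Injective (fun k => Titer (S k) m).
Proof.
  intros Hdiv i j H.
  enough (S i = S j) by lia.
  apply (unbounded_orbit_injective T m); [| exact H].
  intros B. destruct (Hdiv B) as [k [_ Hk]]. now exists k.
Qed.

Definition on_image {G : AbelianMonoid} (e : nat -> nat) (g : nat -> G) (n : nat) : G :=
  if excluded_middle_informative (exists j, e j = n) then g n else zero.

Section FiniteSums.
Context {G : AbelianMonoid}.

Lemma sum_n_zero (K : nat) : sum_n (fun _ => @zero G) K = zero.
Proof. apply sum_n_m_const_zero. Qed.

Lemma sum_n_single (h : nat -> G) j0 K :
  (j0 <= K)%nat -> (forall j, j <> j0 -> h j = zero) -> sum_n h K = h j0.
Proof.
  intros Hj0 Hh. induction K as [| K IH].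
  - rewrite sum_O. now replace j0 with 0%nat by lia.
  - rewrite sum_Sn. destruct (Nat.eq_dec j0 (S K)) as [-> | Hne].
    + rewrite (sum_n_ext_loc h (fun _ => zero)) by (intros j Hj; apply Hh; lia).
      now rewrite sum_n_zero, plus_zero_l.
    + rewrite IH by lia. rewrite (Hh (S K)) by auto. apply plus_zero_r.
Qed.

Variable (e : nat -> nat).
Hypothesis He : Injective e.

Lemma sum_n_fiber (g : nat -> G) n K : (forall j, e j = n -> (j <= K)%nat) ->
  sum_n (fun j => if Nat.eqb (e j) n then g (e j) else zero) K = on_image e g n.
Proof.
  intros HK. unfold on_image.
  destruct excluded_middle_informative as [[j0 Hj0] | Hnone].
  - rewrite (sum_n_single _ j0).
    + now rewrite Hj0, Nat.eqb_refl.
    + now apply HK.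
    + intros j Hj. destruct (Nat.eqb_spec (e j) n); [| reflexivity].
      exfalso. apply Hj, He. congruence.
  - transitivity (sum_n (fun _ => @zero G) K); [| apply sum_n_zero].
    apply sum_n_ext. intros j.
    destruct (Nat.eqb_spec (e j) n); [exfalso; eauto | reflexivity].
Qed.

Lemma sum_n_on_image (g : nat -> G) N K : (forall j, (e j <= N)%nat -> (j <= K)%nat) ->
  sum_n (on_image e g) N = sum_n (fun j => if Nat.leb (e j) N then g (e j) else zero) K.
Proof.
  induction N as [| N IH]; intros HK.
  - rewrite sum_O, <- (sum_n_fiber g 0 K) by (intros j Hj; apply HK; lia).
    apply sum_n_ext. intros j. now destruct (e j).
  - rewrite sum_Sn, IH by (intros j Hj; apply HK; lia).
    rewrite <- (sum_n_fiber g (S N) K) by (intros j Hj; apply HK; lia).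
    rewrite <- sum_n_plus. apply sum_n_ext. intros j.
    destruct (Nat.leb_spec (e j) N), (Nat.eqb_spec (e j) (S N)), (Nat.leb_spec (e j) (S N));
      try lia; rewrite ?plus_zero_l, ?plus_zero_r; reflexivity.
Qed.

End FiniteSums.

Lemma is_series_on_image {K : AbsRing} {V : NormedModule K} (e : nat -> nat) (g : nat -> V) W :
  Injective e -> is_series (fun j => g (e j)) W -> ex_series (fun j => norm (g (e j))) ->
  is_series (on_image e g) W.
Proof.
  intros He HW Hnorm. unfold is_series.
  apply filterlim_locally_ball_norm. intros eps.
  destruct (Cauchy_ex_series _ Hnorm (pos_div_2 eps)) as [M HM].
  destruct (proj1 (filterlim_locally_ball_norm _ W) HW (pos_div_2 eps)) as [M' HM'].
  set (J := Nat.max M M').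
  destruct (bounded_on_segment e J) as [B HB].
  exists B. intros N HN.
  destruct (injective_preimage_bounded e N He) as [L HL].
  assert (HJL : (J <= L)%nat) by (apply HL; specialize (HB J (le_n J)); lia).
  rewrite (sum_n_on_image e He g N L HL). unfold sum_n.
  rewrite (sum_n_m_Chasles _ 0 J L) by lia.
  rewrite (sum_n_m_ext_loc _ (fun j => g (e j)) 0 J).
  2:{ intros j Hj. destruct (Nat.leb_spec (e j) N); [reflexivity |].
      specialize (HB j ltac:(lia)). lia. }
  set (tail := sum_n_m _ (S J) L).
  assert (Htail : norm tail < eps / 2).
  { eapply Rle_lt_trans; [apply norm_sum_n_m |].
    eapply Rle_lt_trans; [| apply (HM (S J) L); lia].
    eapply Rle_trans; [| apply Rle_abs].
    apply sum_n_m_le. intros j. destruct (e j <=? N)%nat; [apply Rle_refl |].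
    rewrite norm_zero. apply norm_ge_0. }
  replace (pos eps) with (eps / 2 + eps / 2) by lra.
  apply ball_norm_triangle with (sum_n (fun j => g (e j)) J).
  - apply HM'. lia.
  - unfold ball_norm, minus.
    now rewrite plus_comm, plus_assoc, plus_opp_l, plus_zero_l.
Qed.

Lemma sum_n_nonneg_mono (a : nat -> R) n m :
  (forall k, 0 <= a k) -> (n <= m)%nat -> sum_n a n <= sum_n a m.
Proof.
  intros Ha Hnm. induction Hnm as [| m _ IH]; [apply Rle_refl |].
  rewrite sum_Sn. specialize (Ha (S m)). change (plus _ _) with (sum_n a m + a (S m)). lra.
Qed.

Lemma sum_n_comp_injective_le (f : nat -> R) (e : nat -> nat) K N :
  Injective e -> (forall n, 0 <= f n) -> (forall j, (j <= K)%nat -> (e j <= N)%nat) ->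
  sum_n (fun j => f (e j)) K <= sum_n f N.
Proof.
  intros He Hf HN.
  destruct (injective_preimage_bounded e N He) as [L HL].
  set (r j := if Nat.leb (e j) N then f (e j) else 0).
  apply Rle_trans with (sum_n r L).
  - rewrite (sum_n_ext_loc _ r K)
      by (intros j Hj; unfold r; now rewrite (proj2 (Nat.leb_le _ _) (HN j Hj))).
    apply sum_n_nonneg_mono; [| apply HL, HN; lia].
    intros j. unfold r. destruct (e j <=? N)%nat; [apply Hf | apply Rle_refl].
  - change (sum_n (fun j => if Nat.leb (e j) N then f (e j) else zero) L <= sum_n f N).
    rewrite <- (sum_n_on_image e He f N L HL).
    apply sum_n_m_le. intros n. unfold on_image.
    destruct excluded_middle_informative; [apply Rle_refl | apply Hf].
Qed.

Lemma ex_series_comp_injective (f : nat -> R) (e : nat -> nat) :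
  Injective e -> (forall n, 0 <= f n) -> ex_series f -> ex_series (fun j => f (e j)).
Proof.
  intros He Hf [s Hs].
  destruct (ex_finite_lim_seq_incr (sum_n (fun j => f (e j))) s) as [l Hl].
  - intros n. apply sum_n_nonneg_mono; auto.
  - intros K. destruct (bounded_on_segment e K) as [N HN].
    apply Rle_trans with (sum_n f N); [now apply sum_n_comp_injective_le |].
    apply (is_lim_seq_incr_compare (sum_n f)); [exact Hs |].
    intros n. apply sum_n_nonneg_mono; auto.
  - now exists l.
Qed.

(* [is_series_ext] with the pointwise equation stated in [C], where [ring] applies. *)
Lemma is_series_C_ext (u v : nat -> C) l :
  (forall n, u n = v n) -> is_series u l -> is_series v l.
Proof. apply is_series_ext. Qed.

Lemma sum_n_C_fst (u : nat -> C) n : fst (sum_n u n) = sum_n (fun k => fst (u k)) n.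
Proof. induction n as [| n IH]; [now rewrite !sum_O | now rewrite !sum_Sn, <- IH]. Qed.

Lemma sum_n_C_snd (u : nat -> C) n : snd (sum_n u n) = sum_n (fun k => snd (u k)) n.
Proof. induction n as [| n IH]; [now rewrite !sum_O | now rewrite !sum_Sn, <- IH]. Qed.

Lemma is_series_C_fst (u : nat -> C) l :
  is_series u l -> is_series (fun n => fst (u n)) (fst l).
Proof.
  intros H. apply (filterlim_ext (fun n => fst (sum_n u n))); [apply sum_n_C_fst |].
  eapply filterlim_comp; [exact H |]. apply continuous_fst.
Qed.

Lemma is_series_C_snd (u : nat -> C) l :
  is_series u l -> is_series (fun n => snd (u n)) (snd l).
Proof.
  intros H. apply (filterlim_ext (fun n => snd (sum_n u n))); [apply sum_n_C_snd |].
  eapply filterlim_comp; [exact H |]. apply continuous_snd.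
Qed.

Lemma Cseries_correct (u : nat -> C) l : is_series u l -> Cseries u = l.
Proof.
  intros H. unfold Cseries.
  rewrite (is_series_unique _ _ (is_series_C_fst _ _ H)), (is_series_unique _ _ (is_series_C_snd _ _ H)).
  now destruct l.
Qed.

Lemma real_power_series_coef_unique (c d : nat -> R) (g : R -> R) :
  (forall x, Rabs x < 1 -> is_series (fun n => c n * x ^ n) (g x)) ->
  (forall x, Rabs x < 1 -> is_series (fun n => d n * x ^ n) (g x)) ->
  forall n, c n = d n.
Proof.
  assert (Hrad : forall a : nat -> R, (forall x, Rabs x < 1 -> is_series (fun n => a n * x ^ n) (g x)) ->
            Rbar_lt 0 (CV_radius a)).
  { intros a Ha. apply Rbar_lt_le_trans with (1 / 2); [simpl; lra |].
    apply Rbar_not_lt_le. intros Hlt.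
    rewrite <- (Rabs_pos_eq (1 / 2)) in Hlt by lra.
    apply (CV_disk_outside _ _ Hlt), ex_series_lim_0.
    exists (g (1 / 2)). apply Ha. rewrite Rabs_pos_eq; lra. }
  intros Hc Hd n. apply PSeries_ext_recip; [now apply Hrad | now apply Hrad |].
  exists (mkposreal 1 Rlt_0_1). intros x Hx.
  assert (Hx1 : Rabs x < 1).
  { change (Rabs (x - 0) < 1) in Hx. now rewrite Rminus_0_r in Hx. }
  unfold PSeries. now rewrite (is_series_unique _ _ (Hc x Hx1)), (is_series_unique _ _ (Hd x Hx1)).
Qed.

Lemma power_series_rep_on_reals (a : nat -> C) f x : power_series_rep a f -> Rabs x < 1 ->
  is_series (fun n => fst (a n) * x ^ n) (fst (f (RtoC x))) /\
  is_series (fun n => snd (a n) * x ^ n) (snd (f (RtoC x))).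
Proof.
  intros Ha Hx.
  assert (H := Ha (RtoC x) ltac:(unfold inD; now rewrite Cmod_R)).
  split; [apply is_series_C_fst in H | apply is_series_C_snd in H];
    (eapply is_series_ext; [| exact H]); intros n;
    cbv beta; rewrite <- RtoC_pow; destruct (a n); simpl; ring.
Qed.

Lemma power_series_rep_unique (a b : nat -> C) f :
  power_series_rep a f -> power_series_rep b f -> forall n, a n = b n.
Proof.
  intros Ha Hb n.
  assert (Hfst : fst (a n) = fst (b n)).
  { apply (real_power_series_coef_unique (fun k => fst (a k)) (fun k => fst (b k))
             (fun x => fst (f (RtoC x))));
      intros x Hx; [apply (power_series_rep_on_reals a) | apply (power_series_rep_on_reals b)]; auto. }
  assert (Hsnd : snd (a n) = snd (b n)).
  { apply (real_power_series_coef_unique (fun k => snd (a k)) (fun k => snd (b k))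
             (fun x => snd (f (RtoC x))));
      intros x Hx; [apply (power_series_rep_on_reals a) | apply (power_series_rep_on_reals b)]; auto. }
  destruct (a n), (b n). simpl in *. now subst.
Qed.

(* [Cpow_deriv z n = n z^(n-1)], defined by recursion to avoid the predecessor. *)
Fixpoint Cpow_deriv (z : C) (n : nat) : C :=
  match n with
  | O => 0%C
  | S n => (z * Cpow_deriv z n + Cpow z n)%C
  end.

Section PowerBounds.
Variables (y z : C) (r : R).
Hypotheses (Hr : 0 < r) (Hy : Cmod y <= r) (Hz : Cmod z <= r).

Lemma Cmod_pow_le n : Cmod (Cpow z n) <= r ^ n.
Proof. rewrite Cmod_pow. apply pow_incr. split; [apply Cmod_ge_0 | exact Hz]. Qed.

Lemma Cpow_sub_bound n : r * Cmod (Cpow y n - Cpow z n) <= INR n * r ^ n * Cmod (y - z).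
Proof.
  induction n as [| n IH].
  - replace (Cpow y 0 - Cpow z 0)%C with (RtoC 0) by (simpl; ring). rewrite Cmod_0. simpl. lra.
  - replace (Cpow y (S n) - Cpow z (S n))%C with (y * (Cpow y n - Cpow z n) + Cpow z n * (y - z))%C
      by (simpl; ring).
    pose proof (Cmod_triangle (y * (Cpow y n - Cpow z n)) (Cpow z n * (y - z))) as Htri.
    rewrite !Cmod_mult in Htri.
    set (E := Cmod (Cpow y n - Cpow z n)) in *. set (d := Cmod (y - z)) in *.
    assert (Hd : 0 <= d) by apply Cmod_ge_0.
    assert (Hnr : 0 <= INR n * r ^ n * d).
    { apply Rmult_le_pos; [apply Rmult_le_pos; [apply pos_INR | apply pow_le; lra] | exact Hd]. }
    pose proof (Cmod_ge_0 y). pose proof (Cmod_pow_le n).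
    pose proof (Rmult_le_compat_l (Cmod y) _ _ (Cmod_ge_0 y) IH).
    pose proof (Rmult_le_compat_r _ _ _ Hnr Hy).
    pose proof (Rmult_le_compat_r d _ _ Hd (Cmod_pow_le n)).
    rewrite S_INR. simpl pow. nra.
Qed.

Lemma Cpow_deriv_bound n : r * Cmod (Cpow_deriv z n) <= INR n * r ^ n.
Proof.
  induction n as [| n IH]; simpl Cpow_deriv.
  - rewrite Cmod_0. simpl. lra.
  - pose proof (Cmod_triangle (z * Cpow_deriv z n) (Cpow z n)) as Htri. rewrite Cmod_mult in Htri.
    pose proof (Cmod_ge_0 z). pose proof (Cmod_pow_le n).
    assert (Hnr : 0 <= INR n * r ^ n) by (apply Rmult_le_pos; [apply pos_INR | apply pow_le; lra]).
    pose proof (Rmult_le_compat_l (Cmod z) _ _ (Cmod_ge_0 z) IH).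
    pose proof (Rmult_le_compat_r _ _ _ Hnr Hz).
    rewrite S_INR. simpl pow. nra.
Qed.

Lemma Cpow_taylor_bound n :
  r ^ 2 * Cmod (Cpow y n - Cpow z n - (y - z) * Cpow_deriv z n)
  <= INR n * INR n * r ^ n * Cmod (y - z) ^ 2.
Proof.
  induction n as [| n IH].
  - replace (Cpow y 0 - Cpow z 0 - (y - z) * Cpow_deriv z 0)%C with (RtoC 0) by (simpl; ring).
    rewrite Cmod_0. simpl. lra.
  - replace (Cpow y (S n) - Cpow z (S n) - (y - z) * Cpow_deriv z (S n))%C
      with ((y - z) * (Cpow y n - Cpow z n) + z * (Cpow y n - Cpow z n - (y - z) * Cpow_deriv z n))%C
      by (simpl; ring).
    pose proof (Cpow_sub_bound n) as HE.
    pose proof (Cmod_triangle ((y - z) * (Cpow y n - Cpow z n))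
                  (z * (Cpow y n - Cpow z n - (y - z) * Cpow_deriv z n))) as Htri.
    rewrite !Cmod_mult in Htri.
    set (E := Cmod (Cpow y n - Cpow z n)) in *.
    set (D := Cmod (Cpow y n - Cpow z n - (y - z) * Cpow_deriv z n)) in *.
    set (d := Cmod (y - z)) in *.
    assert (Hd : 0 <= d) by apply Cmod_ge_0.
    pose proof (pos_INR n). pose proof (pow_le r n (Rlt_le _ _ Hr)).
    assert (Hnn : 0 <= INR n * INR n * r ^ n * d ^ 2).
    { apply Rmult_le_pos; [apply Rmult_le_pos; [apply Rmult_le_pos |] | apply pow_le]; assumption. }
    pose proof (Rmult_le_compat_l (r * d) _ _ (Rmult_le_pos _ _ (Rlt_le _ _ Hr) Hd) HE).
    pose proof (Rmult_le_compat_l (Cmod z) _ _ (Cmod_ge_0 z) IH).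
    pose proof (Rmult_le_compat_r _ _ _ Hnn Hz).
    pose proof (Rmult_le_compat_l (r ^ 2) _ _ (pow_le r 2 (Rlt_le _ _ Hr)) Htri).
    assert (0 <= (INR n + 1) * r ^ S n * d ^ 2).
    { apply Rmult_le_pos; [apply Rmult_le_pos; [lra | apply pow_le; lra] | apply pow_le; exact Hd]. }
    rewrite S_INR. simpl pow in *. lra.
Qed.

End PowerBounds.

Lemma norm_series_le {K : AbsRing} {V : NormedModule K} (u : nat -> V) (b : nat -> R) lu lb :
  is_series u lu -> is_series b lb -> (forall n, norm (u n) <= b n) -> norm lu <= lb.
Proof.
  intros Hu Hb Hub. change (Rbar_le (norm lu) lb).
  apply (filterlim_le (F := eventually) (fun n => norm (sum_n u n)) (sum_n b)).
  - apply filter_forall. intros n. eapply Rle_trans; [apply norm_sum_n_m |].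
    apply sum_n_m_le. exact Hub.
  - eapply filterlim_comp; [exact Hu | apply filterlim_norm].
  - exact Hb.
Qed.

Lemma ex_series_INR_sq_pow r : 0 <= r < 1 -> ex_series (fun n => INR n * INR n * r ^ n).
Proof.
  intros Hr.
  assert (Hrad : CV_radius (fun _ => 1) = 1).
  { rewrite (CV_radius_finite_DAlembert _ 1); [now rewrite Rinv_1 | intros; lra | lra |].
    eapply is_lim_seq_ext; [| apply is_lim_seq_const].
    intros n. simpl. rewrite Rdiv_1_l, Rinv_1. now rewrite Rabs_R1. }
  assert (H : ex_pseries (PS_derive (PS_derive (fun _ => 1))) r).
  { apply CV_radius_inside. rewrite !CV_radius_derive, Hrad, Rabs_pos_eq; simpl; lra. }
  apply ex_pseries_R in H.
  apply (ex_series_le (K := R_AbsRing) (V := R_CompleteNormedModule)) with (2 := H).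
  intros n. unfold PS_derive. change norm with Rabs.
  pose proof (pow_le r n (proj1 Hr)). pose proof (pos_INR n).
  rewrite Rabs_pos_eq by (apply Rmult_le_pos; [nra | lra]).
  rewrite !S_INR. nra.
Qed.

Lemma is_derive_of_quadratic_remainder {K : AbsRing} {V : NormedModule K}
    (f : K -> V) z l (M delta : R) :
  0 < delta ->
  (forall y, abs (minus y z) < delta ->
     norm (minus (minus (f y) (f z)) (scal (minus y z) l)) <= M * abs (minus y z) ^ 2) ->
  is_derive f z l.
Proof.
  intros Hdelta Hrem. split; [apply is_linear_scal_l |].
  intros x Hx. apply (is_filter_lim_locally_unique (V := AbsRing_NormedModule K)) in Hx. subst x.
  intros eps.
  set (M' := Rmax M 0 + 1).
  assert (HM' : 0 < M') by (unfold M'; pose proof (Rmax_r M 0); lra).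
  assert (Hr : 0 < Rmin delta (eps / M'))
    by (apply Rmin_pos; [lra | apply Rdiv_lt_0_compat; [apply cond_pos | lra]]).
  exists (mkposreal _ Hr). intros y Hy.
  pose proof (Hrem y) as Hremy.
  set (d := abs (minus y z)) in Hremy.
  change (norm (minus (minus (f y) (f z)) (scal (minus y z) l)) <= eps * d).
  assert (Hyd : d < Rmin delta (eps / M')) by exact Hy.
  assert (Hd : 0 <= d) by apply abs_ge_0.
  assert (HdM : d * M' <= eps).
  { apply Rmult_le_reg_r with (/ M'); [now apply Rinv_0_lt_compat |].
    rewrite Rmult_assoc, Rinv_r, Rmult_1_r by lra.
    apply Rlt_le, Rlt_le_trans with (1 := Hyd), Rmin_r. }
  eapply Rle_trans; [apply Hremy, Rlt_le_trans with (1 := Hyd), Rmin_l |].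
  pose proof (Rmult_le_compat_r (d ^ 2) _ _ (pow2_ge_0 d) (Rmax_l M 0)).
  pose proof (Rmult_le_compat_r d _ _ Hd HdM).
  unfold M' in *. clearbody d. nra.
Qed.

Section BoundedCoefficients.
Variables (a : nat -> C) (A : R).
Hypothesis HA : forall n, Cmod (a n) <= A.

Let HA0 : 0 <= A := Rle_trans _ _ _ (Cmod_ge_0 (a 0%nat)) (HA 0%nat).

Lemma ex_series_Cpow_deriv z r : 0 < r < 1 -> Cmod z <= r ->
  ex_series (fun n => (a n * Cpow_deriv z n)%C).
Proof.
  intros Hr Hz.
  destruct (ex_series_INR_sq_pow r ltac:(lra)) as [s Hs].
  apply (ex_series_le (K := C_AbsRing) (V := C_CompleteNormedModule))
    with (fun n => A / r * (INR n * INR n * r ^ n)).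
  - intros n. change norm with Cmod. rewrite Cmod_mult.
    pose proof (Cpow_deriv_bound z r (proj1 Hr) Hz n).
    assert (INR n * r ^ n <= INR n * INR n * r ^ n).
    { pose proof (pow_le r n ltac:(lra)). destruct n; [simpl; lra |].
      pose proof (pos_INR n). rewrite S_INR. nra. }
    apply Rle_trans with (A * Cmod (Cpow_deriv z n)).
    + apply Rmult_le_compat_r; [apply Cmod_ge_0 | apply HA].
    + unfold Rdiv. apply Rmult_le_reg_l with r; [lra |].
      replace (r * (A * / r * (INR n * INR n * r ^ n))) with (A * (INR n * INR n * r ^ n))
        by (field; lra).
      nra.
  - exists (A / r * s). now apply (is_series_scal_l (K := R_AbsRing) (V := R_NormedModule)).
Qed.

Lemma power_series_rep_in_AD f : power_series_rep a f -> in_AD f.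
Proof.
  intros Hf z Hz. unfold inD in Hz. pose proof (Cmod_ge_0 z).
  set (r := (1 + Cmod z) / 2).
  assert (Hr : 0 < r < 1) by (unfold r; lra).
  destruct (ex_series_Cpow_deriv z r Hr ltac:(unfold r; lra)) as [l Hl].
  destruct (ex_series_INR_sq_pow r ltac:(lra)) as [s Hs].
  exists l.
  apply (is_derive_of_quadratic_remainder f z l (A / r ^ 2 * s) ((1 - Cmod z) / 2)); [lra |].
  intros y Hy. change (Cmod (y - z) < (1 - Cmod z) / 2) in Hy.
  change (Cmod (f y - f z - (y - z) * l) <= A / r ^ 2 * s * Cmod (y - z) ^ 2).
  assert (Hyr : Cmod y <= r).
  { replace y with (z + (y - z))%C by ring. pose proof (Cmod_triangle z (y - z)). unfold r; lra. }
  replace (A / r ^ 2 * s * Cmod (y - z) ^ 2) with (A / r ^ 2 * Cmod (y - z) ^ 2 * s) by ring.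
  apply (norm_series_le (fun n => a n * (Cpow y n - Cpow z n - (y - z) * Cpow_deriv z n))%C
           (fun n => A / r ^ 2 * Cmod (y - z) ^ 2 * (INR n * INR n * r ^ n))).
  - apply (is_series_C_ext
             (fun n => (a n * Cpow y n - a n * Cpow z n - (y - z) * (a n * Cpow_deriv z n))%C)).
    { intros n. ring. }
    apply (is_series_minus (K := C_AbsRing) (V := C_NormedModule)).
    + apply (is_series_minus (K := C_AbsRing) (V := C_NormedModule)); apply Hf; unfold inD; lra.
    + now apply (is_series_scal_l (K := C_AbsRing) (V := C_NormedModule)).
  - now apply (is_series_scal_l (K := R_AbsRing) (V := R_NormedModule)).
  - intros n. change norm with Cmod. rewrite Cmod_mult.
    pose proof (Cpow_taylor_bound y z r (proj1 Hr) Hyr ltac:(unfold r; lra) n) as Htay.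
    apply Rle_trans with (A * Cmod (Cpow y n - Cpow z n - (y - z) * Cpow_deriv z n)).
    + apply Rmult_le_compat_r; [apply Cmod_ge_0 | apply HA].
    + pose proof (pow_lt r 2 (proj1 Hr)).
      apply Rmult_le_reg_l with (r ^ 2); [lra |].
      replace (r ^ 2 * (A / r ^ 2 * Cmod (y - z) ^ 2 * (INR n * INR n * r ^ n)))
        with (A * (INR n * INR n * r ^ n * Cmod (y - z) ^ 2)) by (field; lra).
      nra.
Qed.

End BoundedCoefficients.

Lemma is_series_Cmult_on_image (e : nat -> nat) (g : nat -> C) W :
  Injective e -> is_series (fun j => g (e j)) W -> ex_series (fun j => Cmod (g (e j))) ->
  is_series (fun n => (on_image e (fun _ => RtoC 1) n * g n)%C) W.
Proof.
  intros He HW Hnorm.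
  apply (is_series_ext (on_image e g)).
  2: exact (is_series_on_image (V := C_NormedModule) e g W He HW Hnorm).
  intros n. unfold on_image. destruct excluded_middle_informative.
  - symmetry. apply Cmult_1_l.
  - symmetry. apply Cmult_0_l.
Qed.

Lemma ex_series_Cmod_Cpow_injective (e : nat -> nat) z :
  Injective e -> Cmod z < 1 -> ex_series (fun j => Cmod (Cpow z (e j))).
Proof.
  intros He Hz.
  apply (ex_series_ext (fun j => Cmod z ^ e j)); [intros j; symmetry; apply Cmod_pow |].
  apply (ex_series_comp_injective (fun n => Cmod z ^ n) e He).
  { intros n. apply pow_le, Cmod_ge_0. }
  exists (/ (1 - Cmod z)). apply is_series_geom. rewrite Rabs_pos_eq; [exact Hz | apply Cmod_ge_0].
Qed.

Lemma ex_series_of_Cmod (u : nat -> C) : ex_series (fun n => Cmod (u n)) -> ex_series u.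
Proof.
  apply (ex_series_le (K := C_AbsRing) (V := C_CompleteNormedModule)). intros n. apply Rle_refl.
Qed.

Definition F_coef (m n : nat) : C :=
  (on_image (fun p => m * 2 ^ p)%nat (fun _ => RtoC 1) n
   + on_image (fun k => Titer (S k) m) (fun _ => RtoC 1) n)%C.

Lemma Cmod_F_coef_le m n : Cmod (F_coef m n) <= 2.
Proof.
  assert (H01 : forall e, Cmod (on_image e (fun _ => RtoC 1) n) <= 1).
  { intros e. unfold on_image. destruct excluded_middle_informative.
    - rewrite Cmod_1. lra.
    - change (Cmod 0 <= 1). rewrite Cmod_0. lra. }
  eapply Rle_trans; [apply Cmod_triangle |].
  pose proof (H01 (fun p => m * 2 ^ p)%nat). pose proof (H01 (fun k => Titer (S k) m)). lra.
Qed.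

Section CollatzFixedPoint.
Variable m : nat.
Hypotheses (Hm : (0 < m)%nat) (Hdiv : unbounded_trajectory m).

Lemma F_parts_Cmod_summable z : inD z ->
  ex_series (fun p => Cmod (F_part1 m z p)) /\ ex_series (fun k => Cmod (F_part2 m z k)).
Proof.
  intros Hz. split; apply ex_series_Cmod_Cpow_injective; auto.
  - now apply mul_pow2_injective.
  - now apply trajectory_injective.
Qed.

Lemma F_parts_summable z : inD z -> ex_series (F_part1 m z) /\ ex_series (F_part2 m z).
Proof. intros Hz. destruct (F_parts_Cmod_summable z Hz). split; now apply ex_series_of_Cmod. Qed.

Lemma F_split z : inD z -> exists s1 s2 : C,
  is_series (F_part1 m z) s1 /\ is_series (F_part2 m z) s2 /\ F m z = (s1 + s2)%C.
Proof.
  intros Hz. destruct (F_parts_summable z Hz) as [[s1 H1] [s2 H2]].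
  exists s1, s2. repeat split; auto.
  unfold F. now rewrite (Cseries_correct _ _ H1), (Cseries_correct _ _ H2).
Qed.

Lemma is_series_F_coef (g : nat -> C) w1 w2 :
  is_series (fun p => g (m * 2 ^ p)%nat) w1 -> ex_series (fun p => Cmod (g (m * 2 ^ p)%nat)) ->
  is_series (fun k => g (Titer (S k) m)) w2 -> ex_series (fun k => Cmod (g (Titer (S k) m))) ->
  is_series (fun n => (F_coef m n * g n)%C) (w1 + w2)%C.
Proof.
  intros H1 N1 H2 N2.
  apply (is_series_C_ext (fun n => on_image (fun p => m * 2 ^ p)%nat (fun _ => RtoC 1) n * g n
                                   + on_image (fun k => Titer (S k) m) (fun _ => RtoC 1) n * g n)%C).
  - intros n. unfold F_coef. ring.
  - exact (is_series_plus _ _ _ _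
             (is_series_Cmult_on_image _ g _ (mul_pow2_injective m Hm) H1 N1)
             (is_series_Cmult_on_image _ g _ (trajectory_injective m Hdiv) H2 N2)).
Qed.

Lemma F_power_series : power_series_rep (F_coef m) (F m).
Proof.
  intros z Hz. destruct (F_split z Hz) as [s1 [s2 [H1 [H2 ->]]]].
  destruct (F_parts_Cmod_summable z Hz) as [N1 N2].
  now apply is_series_F_coef.
Qed.

Lemma F_collatz_image : collatz_op_image (F_coef m) (F m).
Proof.
  intros z Hz. destruct (F_split z Hz) as [s1 [s2 [H1 [H2 ->]]]].
  destruct (F_parts_Cmod_summable z Hz) as [N1 N2].
  replace (s1 + s2)%C with ((s1 + Cpow z (T m)) + (s2 - Cpow z (T m)))%C by ring.
  apply (is_series_F_coef (fun n => Cpow z (T n))).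
  - apply is_series_decr_1. rewrite Nat.pow_0_r, Nat.mul_1_r.
    change (plus (s1 + Cpow z (T m))%C (opp (Cpow z (T m)))) with (s1 + Cpow z (T m) - Cpow z (T m))%C.
    replace (s1 + Cpow z (T m) - Cpow z (T m))%C with s1 by ring.
    apply (is_series_ext (F_part1 m z)); [| exact H1].
    intros p. unfold F_part1. now rewrite T_mul_pow2_S.
  - apply ex_series_incr_1.
    apply (ex_series_ext (fun p => Cmod (F_part1 m z p))); [| exact N1].
    intros p. unfold F_part1. now rewrite T_mul_pow2_S.
  - apply (is_series_incr_1 (F_part2 m z)).
    change (plus (s2 - Cpow z (T m))%C (F_part2 m z 0)) with (s2 - Cpow z (T m) + Cpow z (T m))%C.
    replace (s2 - Cpow z (T m) + Cpow z (T m))%C with s2 by ring.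
    exact H2.
  - now apply (ex_series_incr_1 (fun k => Cmod (F_part2 m z k))).
Qed.

End CollatzFixedPoint.

Theorem mainTheorem4 (m : nat) (Hm : (0 < m)%nat) (Hdiv : unbounded_trajectory m) :
  (* the defining series converge on D *)
  (forall z : C, inD z ->
     ex_series (K := C_AbsRing) (V := C_NormedModule) (F_part1 m z) /\
     ex_series (K := C_AbsRing) (V := C_NormedModule) (F_part2 m z)) /\
  (* F belongs to A(D) *)
  in_AD (F m) /\
  (* F has a power series expansion on D, and for it, 𝒯 F = F *)
  (exists a : nat -> C, power_series_rep a (F m)) /\
  (forall a : nat -> C, power_series_rep a (F m) -> collatz_op_image a (F m)).
Proof.
  pose proof (F_power_series m Hm Hdiv) as Hrep.
  split; [exact (F_parts_summable m Hm Hdiv) |].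
  split; [exact (power_series_rep_in_AD (F_coef m) 2 (Cmod_F_coef_le m) (F m) Hrep) |].
  split; [now exists (F_coef m) |].
  intros a Ha z Hz.
  apply (is_series_ext (fun n => (F_coef m n * Cpow z (T n))%C)).
  - intros n. now rewrite (power_series_rep_unique a (F_coef m) (F m) Ha Hrep n).
  - now apply F_collatz_image.
Qed.
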